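(* Assume the environments are defined by a class of linear spurious correlation latent SCMs $\mathcal{M}_\mathcal{E}$, and let $e^+$ be any test domain with $\mathcal{M}_{e^+}\in\mathcal{M}_\mathcal{E}$. Let $\theta\in\mathbb{R}^d$ satisfy the NCM constraint $\theta^\top\tilde{Q}_r=0$. Then: (a) for logistic regression with log loss $\ell_{\mathrm{LL}}$, $$\mathbb{E}_{({\mathbf{x}}_{e^+},{\textnormal{y}}_{e^+})\sim\mathbb{P}_{\mathrm{test}}}[\ell_{\mathrm{LL}}(\theta^\top{\mathbf{x}}_{e^+},{\textnormal{y}}_{e^+})]\le\mathbb{E}_{({\mathbf{x}},{\textnormal{y}})\sim\mathbb{P}_{\mathrm{train}}}[\ell_{\mathrm{LL}}(\theta^\top{\mathbf{x}},{\textnormal{y}})]+\|\theta\|\,\big\|\tilde{Q}_{r,\perp}^\top Q\,\Lambda^{1/2}\big\|;$$ (b) for linear regression with squared error loss $\ell_{\mathrm{SE}}$, $$\mathbb{E}_{({\mathbf{x}}_{e^+},{\textnormal{y}}_{e^+})\sim\mathbb{P}_{\mathrm{test}}}[\ell_{\mathrm{SE}}(\theta^\top{\mathbf{x}}_{e^+},{\textnormal{y}}_{e^+})]\le 2\,\mathbb{E}_{({\mathbf{x}},{\textnormal{y}})\sim\mathbb{P}_{\mathrm{train}}}[\ell_{\mathrm{SE}}(\theta^\top{\mathbf{x}},{\textnormal{y}})]+2\|\theta\|^2\big\|\tilde{Q}_{r,\perp}^\top Q\,\Lambda^{1/2}\big\|^2.$$ Furthermore, with $s:=\min\{r,|\mathcal{I}(\mathcal{F}_\mathcal{E})|\}$,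 $$\big\|\tilde{Q}_{r,\perp}^\top Q\,\Lambda^{1/2}\big\|^2\le\lambda_1(e^+)\,\mathrm{dist}^2(\tilde{Q}_s,Q_s)+\lambda_{s+1}(e^+).$$
   Context: Setting. $\mathcal{E}$ is a set of domains; each domain $e$ has an SCM $\mathcal{M}_e$, all sharing the same exogenous noise ${\mathbf{u}}\sim\mathbb{P}_\mathcal{U}$, latent variables ${\mathbf{z}}$, observed input ${\mathbf{x}}\in\mathbb{R}^d$ and target ${\textnormal{y}}$. Latent mechanisms $f_{e,i}$ may depend on $e$; write $f_e$ for the induced solution map ${\bm{u}}\mapsto{\bm{z}}$. The observed mechanisms are shared across domains: ${\mathbf{x}}_e=g_{\mathbf{x}}(f_e({\mathbf{u}}))$ with $g_{\mathbf{x}}$ linear, and ${\textnormal{y}}=g_{\textnormal{y}}({\mathbf{z}})$ with $g_{\textnormal{y}}$ linear (linear regression) or the sign of a linear function, ${\textnormal{y}}\in\{-1,1\}$ (logistic regression); the SCMs are linear. The intervention set is $\mathcal{I}(\mathcal{F}_\mathcal{E})=\{i:f_{e,i}\neq f_{e',i}\text{ for some }e,e'\in\mathcal{E}\}$, and the spurious correlation assumption is that no $i\in\mathcal{I}(\mathcal{F}_\mathcal{E})$ is an ancestor of ${\textnormal{y}}$. Training domains $\mathcal{E}_{\mathrm{train}}\subseteq\mathcal{E}$ have weights $\mathbb{P}(e)$, and $\mathbb{P}_{\mathrm{train}}=\sum_{e\in\mathcal{E}_{\mathrm{train}}}\mathbb{P}(e)\mathbb{P}_e$; $\mathbb{P}_{\mathrm{test}}$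 is the distribution of domain $e^+$. For the same noise ${\mathbf{u}}$ define ${\mathbf{x}}_{e^+}=g_{\mathbf{x}}(f_{e^+}({\mathbf{u}}))$ and ${\mathbf{x}}_{e^+\to e}=g_{\mathbf{x}}(f_e({\mathbf{u}}))$. Let $M_{e^+}:=\sum_{e\in\mathcal{E}_{\mathrm{train}}}\mathbb{P}(e)\,\mathbb{E}_{\mathbf{u}}[({\mathbf{x}}_{e^+}-{\mathbf{x}}_{e^+\to e})({\mathbf{x}}_{e^+}-{\mathbf{x}}_{e^+\to e})^\top]=Q\Lambda Q^\top$, where $Q\in\mathbb{R}^{d\times|\mathcal{I}(\mathcal{F}_\mathcal{E})|}$ has orthonormal columns and $\Lambda$ is diagonal with the eigenvalues $\lambda_1(e^+)\ge\lambda_2(e^+)\ge\dots$ of $M_{e^+}$ (eigenvalues beyond index $|\mathcal{I}(\mathcal{F}_\mathcal{E})|$ are zero); $Q_s$ denotes the first $s$ columns of $Q$ and $\lambda_j(e^+)$ the $j$-th largest eigenvalue of $M_{e^+}$. NCM: given $k$ (possibly noisy) counterfactual pairs $({\bm{x}}_{e_j},{\bm{x}}_{e'_j})$, let $\tilde{\Delta}_{\mathbf{x}}=[{\bm{x}}_{e_1}-{\bm{x}}_{e'_1},\dots,{\bm{x}}_{e_k}-{\bm{x}}_{e'_k}]\in\mathbb{R}^{d\times k}$; $\tilde{Q}_r\in\mathbb{R}^{d\times r}$ is the matrix of left singular vectors for the $r$ largest singular values of $\tilde{\Delta}_{\mathbf{x}}$ (similarly $\tilde{Q}_s$), and $\tilde{Q}_{r,\perp}\in\mathbb{R}^{d\times(d-r)}$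 is an orthonormal basis of the orthogonal complement of its column space. Predictions are $\theta^\top{\mathbf{x}}$; $\ell_{\mathrm{LL}}(t,y)=\log(1+e^{-yt})$, $\ell_{\mathrm{SE}}(t,y)=(t-y)^2$. $\|\cdot\|$ is the Euclidean/spectral norm, and $\mathrm{dist}(Q,Q'):=\|QQ^\top-Q'Q'^\top\|$. *)

From HB Require Import structures.
From mathcomp Require Import all_boot all_order all_algebra.
From mathcomp Require Import all_classical all_reals all_analysis.
Set Implicit Arguments. Unset Strict Implicit. Unset Printing Implicit Defensive.
Import Order.TTheory GRing.Theory Num.Theory.
Local Open Scope ring_scope.
Local Open Scope classical_set_scope.

Section Defs.
Variable R : realType.

Definition vnorm n (x : 'cV[R]_n) : R := Num.sqrt (\sum_i x i 0 ^+ 2).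

Definition opnorm m n (A : 'M[R]_(m, n)) : R :=
  sup [set vnorm (A *m x) | x in [set x : 'cV[R]_n | vnorm x <= 1]].

Definition sdist m n (Q Q' : 'M[R]_(m, n)) : R :=
  opnorm (Q *m Q^T - Q' *m Q'^T).

Definition dotv n (x y : 'cV[R]_n) : R := (x^T *m y) 0 0.

(* the linear latent mechanism f_{e,i}(z, u_i) = sum_j A_e(i,j) z_j + b_e(i) u_i
   (A_e supported on the parents of i, see the theorem's hypotheses) *)
Definition mech m (A : 'M[R]_m) (b : 'I_m -> R) (i : 'I_m) : 'cV[R]_m -> R -> R :=
  fun z ui => \sum_j A i j * z j 0 + b i * ui.

Definition intervened (E : Type) m (A : E -> 'M[R]_m) (B : E -> 'I_m -> R)
    (i : 'I_m) : Prop :=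
  exists e e', mech (A e) (B e) i <> mech (A e') (B e') i.

Definition interv_set (E : Type) m (A : E -> 'M[R]_m) (B : E -> 'I_m -> R)
  : {set 'I_m} := [set i | `[< intervened A B i >] ].

(* sign with values in {-1, 1} (convention: sign 0 = 1) *)
Definition sgn1 (t : R) : R := if 0 <= t then 1 else -1.

Definition lossLL (t y : R) : R := ln (1 + expR (- (y * t))).
Definition lossSE (t y : R) : R := (t - y) ^+ 2.

Definition firstcols m n s (h : (s <= n)%N) (Q : 'M[R]_(m, n)) : 'M[R]_(m, s) :=
  colsub (fun j : 'I_s => widen_ord h j) Q.

End Defs.

(* i is an ancestor of y: there is a path i -> ... -> j in the latent DAG
   (pa a b means "a is a parent of b") with j a parent of y *)
Definition anc_y m (pa : rel 'I_m) (pay : pred 'I_m) (i : 'I_m) : bool :=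
  [exists j, pay j && connect pa i j].

From HB Require Import structures.
From mathcomp Require Import all_boot all_order all_algebra.
From mathcomp Require Import all_classical all_reals all_analysis.
From mathcomp Require Import ring lra measurable_realfun.
Set Implicit Arguments. Unset Strict Implicit. Unset Printing Implicit Defensive.
Import Order.TTheory GRing.Theory Num.Theory.
Local Open Scope ring_scope.
Local Open Scope classical_set_scope.

(* The spurious-correlation assumption says that no intervened mechanism is an
   ancestor of y, so (by induction along the DAG) the label computed from the
   same noise u is the same in every domain.  The test loss and the training loss
   of domain e, both evaluated at u, therefore differ only through the prediction
   gap theta^T (x_{e+} - x_{e+ -> e}).  The log loss is 1-Lipschitz in the
   prediction and (a - y)^2 <= 2 (b - y)^2 + 2 (a - b)^2, so both risks are
   controlled by the weighted second moment of the gap, which is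
   theta^T M_{e+} theta.  Since theta^T Qr = 0 we have theta = Qp Qp^T theta,
   hence theta^T M_{e+} theta = |(Qp^T Q Lambda^{1/2})^T Qp^T theta|^2
   <= |theta|^2 C^2.  For the last bound, with v = Qp z, splitting Lambda after
   its s largest eigenvalues gives
   |Lambda^{1/2} Q^T v|^2 <= lambda_1 |Q_s^T v|^2 + lambda_{s+1} |v|^2,
   and |Q_s^T v| <= dist(Qr_s, Q_s) |v| because Qr_s^T v = 0. *)

Section EuclideanNorm.
Variable R : realType.

Lemma vnorm_ge0 n (x : 'cV[R]_n) : 0 <= vnorm x.
Proof. exact: sqrtr_ge0. Qed.

Lemma sqr_vnorm n (x : 'cV[R]_n) : vnorm x ^+ 2 = \sum_i x i 0 ^+ 2.
Proof. by rewrite sqr_sqrtr // sumr_ge0 // => i _; exact: sqr_ge0. Qed.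

Lemma vnorm0 n : vnorm (0 : 'cV[R]_n) = 0.
Proof. by rewrite /vnorm big1 ?sqrtr0 // => i _; rewrite mxE expr0n. Qed.

Lemma vnorm0_eq0 n (x : 'cV[R]_n) : vnorm x = 0 -> x = 0.
Proof.
move=> x0; have /psumr_eq0P x2_eq0 : \sum_i x i 0 ^+ 2 = 0.
  by rewrite -sqr_vnorm x0 expr0n.
apply/matrixP => i j; rewrite (ord1 j) mxE; apply/eqP.
by rewrite -sqrf_eq0 x2_eq0 // => l _; exact: sqr_ge0.
Qed.

Lemma vnormZ n a (x : 'cV[R]_n) : vnorm (a *: x) = `|a| * vnorm x.
Proof.
rewrite /vnorm -sqrtr_sqr -sqrtrM ?sqr_ge0 //; congr Num.sqrt.
by rewrite mulr_sumr; apply: eq_bigr => i _; rewrite mxE exprMn.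
Qed.

Lemma vnormN n (x : 'cV[R]_n) : vnorm (- x) = vnorm x.
Proof. by rewrite -scaleN1r vnormZ normrN normr1 mul1r. Qed.

Lemma normr_coord_le_vnorm n (x : 'cV[R]_n) i : `|x i 0| <= vnorm x.
Proof.
rewrite -sqrtr_sqr ler_sqrt; last by rewrite sumr_ge0 // => j _; exact: sqr_ge0.
by rewrite (bigD1 i) //= lerDl sumr_ge0 // => j _; exact: sqr_ge0.
Qed.

Lemma dotvE n (x y : 'cV[R]_n) : dotv x y = \sum_i x i 0 * y i 0.
Proof. by rewrite /dotv mxE; apply: eq_bigr => i _; rewrite mxE. Qed.

Lemma dotvv n (x : 'cV[R]_n) : dotv x x = vnorm x ^+ 2.
Proof. by rewrite dotvE sqr_vnorm; apply: eq_bigr => i _; rewrite expr2. Qed.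

Lemma dotvC n (x y : 'cV[R]_n) : dotv x y = dotv y x.
Proof. by rewrite !dotvE; apply: eq_bigr => i _; rewrite mulrC. Qed.

Lemma dotvZ n a b (x y : 'cV[R]_n) : dotv (a *: x) (b *: y) = a * b * dotv x y.
Proof. by rewrite !dotvE mulr_sumr; apply: eq_bigr => i _; rewrite !mxE; ring. Qed.

Lemma dotvBr n (x y z : 'cV[R]_n) : dotv x (y - z) = dotv x y - dotv x z.
Proof. by rewrite !dotvE -sumrB; apply: eq_bigr => i _; rewrite !mxE mulrBr. Qed.

Lemma dotv_mulmxl m n (A : 'M[R]_(m, n)) x y : dotv (A *m x) y = dotv x (A^T *m y).
Proof. by rewrite /dotv trmx_mul !mulmxA. Qed.

Lemma dotv_mulmx_sum n (x : 'cV[R]_n) (M : 'M[R]_n) :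
  dotv x (M *m x) = \sum_a \sum_b x a 0 * x b 0 * M a b.
Proof.
rewrite dotvE; apply: eq_bigr => a _; rewrite mxE mulr_sumr.
by apply: eq_bigr => b _; ring.
Qed.

Lemma dotv_le_vnorm n (x y : 'cV[R]_n) : dotv x y <= vnorm x * vnorm y.
Proof.
have amgm (a b : 'cV[R]_n) : 2 * dotv a b <= vnorm a ^+ 2 + vnorm b ^+ 2.
  rewrite !sqr_vnorm dotvE mulr_sumr -big_split /=; apply: ler_sum => i _.
  by have := sqr_ge0 (a i 0 - b i 0); lra.
have [/eqP|xy_neq0] := eqVneq (vnorm x * vnorm y) 0.
  rewrite mulf_eq0 => /orP[]/eqP/vnorm0_eq0->;
  by rewrite dotvE big1 ?vnorm0 ?mul0r ?mulr0 // => i _; rewrite mxE ?mul0r ?mulr0.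
have xy_gt0 : 0 < vnorm x * vnorm y by rewrite lt_def xy_neq0 mulr_ge0 ?vnorm_ge0.
have := amgm (vnorm y *: x) (vnorm x *: y).
rewrite dotvZ !vnormZ !ger0_norm ?vnorm_ge0 //; nra.
Qed.

End EuclideanNorm.

Section OperatorNorm.
Variable R : realType.
Variables m n : nat.
Implicit Type A : 'M[R]_(m, n).

Lemma has_sup_opnorm A :
  has_sup [set vnorm (A *m x) | x in [set x : 'cV[R]_n | vnorm x <= 1]].
Proof.
split; first by exists 0, 0; rewrite /= ?mulmx0 vnorm0.
exists (Num.sqrt (\sum_i (\sum_j `|A i j|) ^+ 2)) => _ [x /= x_le1 <-].
rewrite ler_sqrt; last by rewrite sumr_ge0 // => i _; exact: sqr_ge0.
apply: ler_sum => i _; rewrite -real_normK ?num_real //.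
have row_ge0 : 0 <= \sum_j `|A i j| by rewrite sumr_ge0.
rewrite lerXn2r ?nnegrE // mxE; apply: le_trans (ler_norm_sum _ _ _) _; apply: ler_sum => j _.
by rewrite normrM ler_piMr // (le_trans (normr_coord_le_vnorm _ _)).
Qed.

Lemma opnorm_ge0 A : 0 <= opnorm A.
Proof.
by apply: (sup_upper_bound (has_sup_opnorm A)); exists 0; rewrite /= ?mulmx0 vnorm0.
Qed.

Lemma vnorm_mulmx_le A x : vnorm (A *m x) <= opnorm A * vnorm x.
Proof.
have [/vnorm0_eq0->|x_neq0] := eqVneq (vnorm x) 0.
  by rewrite mulmx0 !vnorm0 mulr0.
have x_gt0 : 0 < vnorm x by rewrite lt_def x_neq0 vnorm_ge0.
have unit_x : vnorm ((vnorm x)^-1 *: x) <= 1.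
  by rewrite vnormZ ger0_norm ?invr_ge0 ?vnorm_ge0 // mulVf.
have : vnorm (A *m ((vnorm x)^-1 *: x)) <= opnorm A.
  by apply: (sup_upper_bound (has_sup_opnorm A)); exists ((vnorm x)^-1 *: x).
rewrite -scalemxAr vnormZ ger0_norm ?invr_ge0 ?vnorm_ge0 //.
by rewrite mulrC ler_pdivrMr.
Qed.

Lemma opnorm_le A c : 0 <= c ->
  (forall x, vnorm (A *m x) <= c * vnorm x) -> opnorm A <= c.
Proof.
move=> c_ge0 Ax_le; apply: ge_sup; first by case: (has_sup_opnorm A).
move=> _ [x /= x_le1 <-]; apply: le_trans (Ax_le x) _.
by rewrite -{2}(mulr1 c) ler_wpM2l.
Qed.

End OperatorNorm.

Section Transpose.
Variable R : realType.

Lemma opnorm_trmx_le m n (A : 'M[R]_(m, n)) : opnorm A^T <= opnorm A.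
Proof.
apply: opnorm_le (opnorm_ge0 A) _ => x.
have [->|Atx_neq0] := eqVneq (vnorm (A^T *m x)) 0.
  by rewrite mulr_ge0 ?opnorm_ge0 ?vnorm_ge0.
have Atx_gt0 : 0 < vnorm (A^T *m x) by rewrite lt_def Atx_neq0 vnorm_ge0.
rewrite -(ler_pM2r Atx_gt0) -expr2 -dotvv dotv_mulmxl trmxK.
apply: le_trans (dotv_le_vnorm _ _) _.
by rewrite (mulrC (opnorm A)) -mulrA ler_wpM2l ?vnorm_ge0 ?vnorm_mulmx_le.
Qed.

Lemma opnorm_trmx m n (A : 'M[R]_(m, n)) : opnorm A^T = opnorm A.
Proof.
by apply/le_anti; rewrite opnorm_trmx_le -{1}(trmxK A) opnorm_trmx_le.
Qed.

End Transpose.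

Section Orthonormal.
Variable R : realType.
Variables m n : nat.
Variable Q : 'M[R]_(m, n).
Hypothesis QtQ : Q^T *m Q = 1%:M.

Lemma vnorm_orthomx w : vnorm (Q *m w) = vnorm w.
Proof.
have : vnorm (Q *m w) ^+ 2 = vnorm w ^+ 2.
  by rewrite -!dotvv dotv_mulmxl mulmxA QtQ mul1mx.
by move/eqP; rewrite eqrXn2 ?vnorm_ge0 // => /eqP.
Qed.

Lemma vnorm_trmx_orthomx_le v : vnorm (Q^T *m v) <= vnorm v.
Proof.
apply: le_trans (vnorm_mulmx_le _ _) _; rewrite opnorm_trmx ler_piMl ?vnorm_ge0 //.
by apply: opnorm_le ler01 _ => w; rewrite vnorm_orthomx mul1r.
Qed.

End Orthonormal.

Lemma orthomx_complement (R : realType) d r (Qr : 'M[R]_(d, r)) (Qp : 'M[R]_(d, d - r))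
    (v : 'cV[R]_d) :
  Qr^T *m Qr = 1%:M -> Qp^T *m Qp = 1%:M -> Qr^T *m Qp = 0 ->
  Qr^T *m v = 0 -> Qp *m (Qp^T *m v) = v.
Proof.
move=> QrtQr QptQp QrtQp Qrtv.
(* V has orthonormal rows, at least d of them, hence a left inverse. *)
pose V := col_mx Qr^T Qp^T.
have VVt : V *m V^T = 1%:M.
  have QptQr : Qp^T *m Qr = 0 by rewrite -[LHS]trmxK trmx_mul trmxK QrtQp trmx0.
  by rewrite tr_col_mx !trmxK mul_col_row QrtQr QptQp QrtQp QptQr -scalar_mx_block.
have /row_fullP [W WV] : row_full V.
  rewrite /row_full eqn_leq rank_leq_col /=.
  have := mxrankM_maxl V V^T; rewrite VVt mxrank1; apply: leq_trans.
  by rewrite -leq_subLR.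
apply/eqP; rewrite eq_sym -subr_eq0; apply/eqP.
rewrite -[LHS]mul1mx -WV -mulmxA /V mul_col_mx !mulmxBr Qrtv.
by rewrite !mulmxA QrtQp QptQp !mul0mx mul1mx !subrr col_mx0 mulmx0.
Qed.

Section Perturbation.
Variable R : realType.

Lemma trmx_firstcols_mul m n s (h : (s <= n)%N) (Q : 'M[R]_(m, n)) (v : 'cV[R]_m) :
  (firstcols h Q)^T *m v = \col_(j < s) (Q^T *m v) (widen_ord h j) 0.
Proof.
apply/matrixP => i j; rewrite (ord1 j) !mxE; apply: eq_bigr => l _.
by rewrite !mxE.
Qed.

Lemma firstcols_orthomx m n s (h : (s <= n)%N) (Q : 'M[R]_(m, n)) :
  Q^T *m Q = 1%:M -> (firstcols h Q)^T *m firstcols h Q = 1%:M.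
Proof.
move=> QtQ; apply/matrixP => i j.
have /matrixP/(_ (widen_ord h i) (widen_ord h j)) := QtQ.
have widen_eq : (widen_ord h i == widen_ord h j) = (i == j).
  by rewrite -[LHS](inj_eq val_inj).
rewrite !mxE widen_eq => <-.
by apply: eq_bigr => l _; rewrite !mxE.
Qed.

Lemma vnorm_diag_sqrt_mul k (lam : nat -> R) (x : 'cV[R]_k) :
  (forall j, 0 <= lam j) ->
  vnorm (diag_mx (\row_(j < k) Num.sqrt (lam j)) *m x) ^+ 2 =
  \sum_(j < k) lam j * x j 0 ^+ 2.
Proof.
move=> lam_ge0; rewrite sqr_vnorm; apply: eq_bigr => j _.
by rewrite mul_diag_mx !mxE exprMn sqr_sqrtr.
Qed.

Lemma weighted_sqr_sum_le k s (h : (s <= k)%N) (lam : nat -> R) (x : 'cV[R]_k) :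
  (forall j, 0 <= lam j) -> (forall j, lam j.+1 <= lam j) ->
  \sum_(j < k) lam j * x j 0 ^+ 2 <=
  lam 0%N * vnorm (\col_(j < s) x (widen_ord h j) 0) ^+ 2 + lam s * vnorm x ^+ 2.
Proof.
move=> lam_ge0 lam_dec.
have lam_le : {homo lam : i j / (i <= j)%N >-> j <= i}.
  by apply: (homo_leq (r := fun a b => b <= a)) => // b a c ba cb; exact: le_trans cb ba.
have head_sqr : vnorm (\col_(j < s) x (widen_ord h j) 0) ^+ 2 =
    \sum_(j < k | (j < s)%N) x j 0 ^+ 2.
  rewrite sqr_vnorm (eq_bigl (fun j : 'I_k => predT j && (j < s)%N)) //.
  by rewrite (big_ord_narrow_cond h); apply: eq_bigr => j _; rewrite mxE.
rewrite head_sqr (bigID (fun j : 'I_k => (j < s)%N)) /=; apply: lerD.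
  by rewrite mulr_sumr; apply: ler_sum => j _; rewrite ler_wpM2r ?sqr_ge0 ?lam_le.
apply: (@le_trans _ _ (\sum_(j < k | ~~ (j < s)%N) lam s * x j 0 ^+ 2)).
  by apply: ler_sum => j; rewrite -leqNgt => /lam_le sj; rewrite ler_wpM2r ?sqr_ge0.
rewrite sqr_vnorm mulr_sumr [X in _ <= X](bigID (fun j : 'I_k => (j < s)%N)) /=.
by rewrite lerDr sumr_ge0 // => j _; rewrite mulr_ge0 ?sqr_ge0.
Qed.

Lemma vnorm_trmx_le_sdist d p (P P' : 'M[R]_(d, p)) v :
  P^T *m P = 1%:M -> P'^T *m v = 0 -> vnorm (P^T *m v) <= sdist P' P * vnorm v.
Proof.
move=> PtP P'tv; rewrite -(vnorm_orthomx PtP) -vnormN.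
have -> : - (P *m (P^T *m v)) = (P' *m P'^T - P *m P^T) *m v.
  by rewrite mulmxBl -!mulmxA P'tv mulmx0 sub0r.
exact: vnorm_mulmx_le.
Qed.

Lemma perturbation_bound d r k (Q : 'M[R]_(d, k)) (lam : nat -> R)
    (Qr : 'M[R]_(d, r)) (Qp : 'M[R]_(d, d - r)) :
  Q^T *m Q = 1%:M -> (forall j, 0 <= lam j) -> (forall j, lam j.+1 <= lam j) ->
  Qp^T *m Qp = 1%:M -> Qr^T *m Qp = 0 ->
  opnorm (Qp^T *m Q *m diag_mx (\row_(j < k) Num.sqrt (lam j))) ^+ 2 <=
  lam 0%N * sdist (firstcols (geq_minl r k) Qr) (firstcols (geq_minr r k) Q) ^+ 2
  + lam (minn r k).
Proof.
move=> QtQ lam_ge0 lam_dec QptQp QrtQp.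
set s := minn r k; set D := sdist _ _; set K := lam 0%N * D ^+ 2 + lam s.
have K_ge0 : 0 <= K by rewrite /K addr_ge0 // mulr_ge0 ?sqr_ge0.
rewrite -(sqr_sqrtr K_ge0) ler_sqr ?nnegrE ?opnorm_ge0 ?sqrtr_ge0 // -opnorm_trmx.
apply: opnorm_le (sqrtr_ge0 K) _ => z.
rewrite -ler_sqr ?nnegrE ?mulr_ge0 ?sqrtr_ge0 ?vnorm_ge0 // exprMn (sqr_sqrtr K_ge0).
set v := Qp *m z.
have Qrtv : (firstcols (geq_minl r k) Qr)^T *m v = 0.
  rewrite trmx_firstcols_mul /v mulmxA QrtQp mul0mx.
  by apply/matrixP => i j; rewrite !mxE.
have head_le :
    vnorm (\col_(j < s) (Q^T *m v) (widen_ord (geq_minr r k) j) 0) <= D * vnorm z.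
  rewrite -trmx_firstcols_mul -(vnorm_orthomx QptQp z).
  exact: vnorm_trmx_le_sdist (firstcols_orthomx _ QtQ) Qrtv.
have tail_le : vnorm (Q^T *m v) <= vnorm z.
  by rewrite -(vnorm_orthomx QptQp z); exact: vnorm_trmx_orthomx_le.
rewrite !trmx_mul tr_diag_mx trmxK -!mulmxA vnorm_diag_sqrt_mul //.
apply: le_trans (weighted_sqr_sum_le (geq_minr r k) _ lam_ge0 lam_dec) _.
rewrite /K mulrDl -mulrA -exprMn; apply: lerD; rewrite ler_wpM2l //.
  by rewrite lerXn2r ?nnegrE ?mulr_ge0 ?vnorm_ge0 ?opnorm_ge0.
by rewrite lerXn2r ?nnegrE ?vnorm_ge0.
Qed.

Lemma dotv_eig_le d k p (Q : 'M[R]_(d, k)) (lam : nat -> R)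
    (P : 'M[R]_(d, p)) (x : 'cV[R]_d) :
  (forall j, 0 <= lam j) -> P^T *m P = 1%:M -> P *m (P^T *m x) = x ->
  dotv x (Q *m diag_mx (\row_(j < k) lam j) *m Q^T *m x) <=
  (vnorm x * opnorm (P^T *m Q *m diag_mx (\row_(j < k) Num.sqrt (lam j)))) ^+ 2.
Proof.
move=> lam_ge0 PtP Px.
set L := diag_mx (\row_(j < k) Num.sqrt (lam j)).
set N := P^T *m Q *m L; set y := L *m (Q^T *m x).
have LL : diag_mx (\row_(j < k) lam j) = L *m L.
  by rewrite mulmx_diag; congr diag_mx; apply/matrixP => i j; rewrite !mxE -expr2 sqr_sqrtr.
have Nty : N^T *m (P^T *m x) = y.
  by rewrite /N !trmx_mul tr_diag_mx trmxK -!mulmxA [P *m _]Px.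
have -> : dotv x (Q *m diag_mx (\row_(j < k) lam j) *m Q^T *m x) = vnorm y ^+ 2.
  rewrite LL -dotvv dotvC.
  have -> : Q *m (L *m L) *m Q^T *m x = (Q *m L) *m y by rewrite /y !mulmxA.
  by rewrite dotv_mulmxl trmx_mul tr_diag_mx -mulmxA.
rewrite -Nty; apply: (@le_trans _ _ ((opnorm N^T * vnorm (P^T *m x)) ^+ 2)).
  by rewrite lerXn2r ?nnegrE ?mulr_ge0 ?vnorm_ge0 ?opnorm_ge0 //; exact: vnorm_mulmx_le.
rewrite opnorm_trmx mulrC lerXn2r ?nnegrE ?mulr_ge0 ?vnorm_ge0 ?opnorm_ge0 //.
by rewrite ler_wpM2r ?opnorm_ge0 //; exact: vnorm_trmx_orthomx_le.
Qed.

End Perturbation.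

Lemma acyclic_ind m (pa : rel 'I_m) :
  (forall i j, pa i j -> ~~ connect pa j i) ->
  forall P : 'I_m -> Prop, (forall i, (forall j, pa j i -> P j) -> P i) -> forall i, P i.
Proof.
move=> acyclic P IH i; have [n] := ubnP #|[set j | connect pa j i]%SET|.
elim: n i => // n IHn i; rewrite ltnS => card_anc; apply: IH => j ji.
apply: IHn; apply: leq_trans card_anc; apply: proper_card; rewrite properE.
apply/andP; split.
  by apply/fintype.subsetP => x; rewrite !inE => xj; exact: connect_trans xj (connect1 ji).
by apply/fintype.subsetPn; exists i; rewrite !inE ?connect0 ?acyclic.
Qed.

Section LabelInvariance.
Variable R : realType.
Variables (m : nat) (E : Type) (A : E -> 'M[R]_m) (B : E -> 'I_m -> R).
Variables (pa : rel 'I_m) (pay : pred 'I_m) (sol : E -> 'cV[R]_m -> 'cV[R]_m).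
Hypothesis acyclic : forall i j, pa i j -> ~~ connect pa j i.
Hypothesis A_pa : forall e i j, A e i j != 0 -> pa j i.
Hypothesis solE : forall e v i, sol e v i 0 = mech (A e) (B e) i (sol e v) (v i 0).
Hypothesis spurious : forall i, intervened A B i -> ~~ anc_y pa pay i.

Lemma sol_anc_y_invariant i : anc_y pa pay i -> forall e e' v, sol e v i 0 = sol e' v i 0.
Proof.
elim/(acyclic_ind acyclic): i => i IH anc_i e e' v.
have mech_eq : mech (A e) (B e) i = mech (A e') (B e') i.
  apply: contrapT => mech_neq.
  have /spurious : intervened A B i by exists e, e'.
  by rewrite anc_i.
rewrite solE mech_eq [RHS]solE /mech; congr (_ + _); apply: eq_bigr => j _.
have [->|/A_pa ji] := eqVneq (A e' i j) 0; first by rewrite !mul0r.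
congr (_ * _); apply: IH => //; case/existsP: anc_i => l /andP [pay_l il].
by apply/existsP; exists l; rewrite pay_l (connect_trans (connect1 ji) il).
Qed.

Lemma dotv_sol_invariant (w : 'cV[R]_m) : (forall j, w j 0 != 0 -> pay j) ->
  forall e e' v, dotv w (sol e v) = dotv w (sol e' v).
Proof.
move=> w_pay e e' v; rewrite !dotvE; apply: eq_bigr => j _.
have [->|/w_pay pay_j] := eqVneq (w j 0) 0; first by rewrite !mul0r.
congr (_ * _); apply: sol_anc_y_invariant.
by apply/existsP; exists j; rewrite pay_j connect0.
Qed.

End LabelInvariance.

Section SquareIntegrable.
Context d (T : measurableType d) (R : realType).
Variable mu : {finite_measure set T -> \bar R}.
Implicit Types (f g : T -> R) (c : R).

Definition sq_integrable f :=
  measurable_fun setT f /\ mu.-integrable setT (fun t => (f t ^+ 2)%:E).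

Lemma integrable_cst c : mu.-integrable setT (fun _ => c%:E).
Proof. exact: finite_measure_integrable_cst. Qed.

Lemma integrableD_EFin f g : mu.-integrable setT (fun t => (f t)%:E) ->
  mu.-integrable setT (fun t => (g t)%:E) ->
  mu.-integrable setT (fun t => (f t + g t)%:E).
Proof. by move=> /integrableD/[apply] => /(_ measurableT). Qed.

Lemma integrableZl_EFin c f : mu.-integrable setT (fun t => (f t)%:E) ->
  mu.-integrable setT (fun t => (c * f t)%:E).
Proof. exact: integrableZl. Qed.

Lemma integrable_sum_EFin I (s : seq I) (F : I -> T -> R) :
  (forall i, mu.-integrable setT (fun t => (F i t)%:E)) ->
  mu.-integrable setT (fun t => (\sum_(i <- s) F i t)%:E).
Proof. by move=> iF; under eq_fun do rewrite -sumEFin; exact: integrable_sum. Qed.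

Lemma integrable_le_EFin f g : measurable_fun setT f -> (forall t, `|f t| <= g t) ->
  mu.-integrable setT (fun t => (g t)%:E) -> mu.-integrable setT (fun t => (f t)%:E).
Proof.
move=> mf fg ig; apply: (le_integrable measurableT _ _ ig); first exact/measurable_EFinP.
by move=> t _; rewrite !abse_EFin lee_fin (le_trans (fg t)) ?ler_norm.
Qed.

Lemma sq_integrable_cst c : sq_integrable (fun _ => c).
Proof. by split; [exact: measurable_cst | exact: integrable_cst]. Qed.

Lemma sq_integrableD f g : sq_integrable f -> sq_integrable g ->
  sq_integrable (fun t => f t + g t).
Proof.
move=> [mf if2] [mg ig2]; split; first exact: measurable_funD.
apply: (integrable_le_EFin (g := fun t => 2 * f t ^+ 2 + 2 * g t ^+ 2)).
- by apply: measurable_funX; exact: measurable_funD.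
- by move=> t; rewrite ger0_norm ?sqr_ge0 //; have := sqr_ge0 (f t - g t); nra.
- by apply: integrableD_EFin; exact: integrableZl_EFin.
Qed.

Lemma sq_integrableZl c f : sq_integrable f -> sq_integrable (fun t => c * f t).
Proof.
move=> [mf if2]; split; first exact: measurable_funM.
by under eq_fun do rewrite exprMn; exact: integrableZl_EFin.
Qed.

Lemma sq_integrableB f g : sq_integrable f -> sq_integrable g ->
  sq_integrable (fun t => f t - g t).
Proof.
move=> sf /(sq_integrableZl (-1)) sg.
by under eq_fun do rewrite -mulN1r; exact: sq_integrableD.
Qed.

Lemma sq_integrable_sum I (s : seq I) (F : I -> T -> R) :
  (forall i, sq_integrable (F i)) -> sq_integrable (fun t => \sum_(i <- s) F i t).
Proof.
move=> sF; elim: s => [|i s IH].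
  by under eq_fun do rewrite big_nil; exact: sq_integrable_cst.
by under eq_fun do rewrite big_cons; exact: sq_integrableD.
Qed.

Lemma integrable_mul_sq f g : sq_integrable f -> sq_integrable g ->
  mu.-integrable setT (fun t => (f t * g t)%:E).
Proof.
move=> [mf if2] [mg ig2].
apply: (integrable_le_EFin (g := fun t => f t ^+ 2 + g t ^+ 2)).
- exact: measurable_funM.
- move=> t; rewrite normrM -[f t ^+ 2]real_normK ?num_real //.
  rewrite -[g t ^+ 2]real_normK ?num_real //; have := sqr_ge0 (`|f t| - `|g t|); nra.
- exact: integrableD_EFin.
Qed.

Lemma integrable_abs_sq f : sq_integrable f -> mu.-integrable setT (fun t => `|f t|%:E).
Proof.
move=> [mf if2]; apply: (integrable_le_EFin (g := fun t => 1 + f t ^+ 2)).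
- by apply: measurableT_comp => //; exact: normr_measurable.
- move=> t; rewrite normr_id -[f t ^+ 2]real_normK ?num_real //.
  by have := normr_ge0 (f t); have := sqr_ge0 (`|f t| - 1); nra.
- exact: integrableD_EFin (integrable_cst 1) if2.
Qed.

Lemma Rintegral_sum I (s : seq I) (F : I -> T -> R) :
  (forall i, mu.-integrable setT (fun t => (F i t)%:E)) ->
  Rintegral mu setT (fun t => \sum_(i <- s) F i t) =
  \sum_(i <- s) Rintegral mu setT (F i).
Proof.
move=> iF; rewrite /Rintegral; under eq_integral do rewrite -sumEFin.
rewrite integral_sum // (eq_bigr (fun i => (Rintegral mu setT (F i))%:E)) ?sumEFin //.
by move=> i _; rewrite fineK // integrable_fin_num.
Qed.

Lemma sq_integrable_dotv n (x : 'cV[R]_n) (X : T -> 'cV[R]_n) :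
  (forall a, sq_integrable (fun t => X t a 0)) -> sq_integrable (fun t => dotv x (X t)).
Proof.
move=> sX; under eq_fun do rewrite dotvE.
by apply: sq_integrable_sum => a; exact: sq_integrableZl.
Qed.

Lemma sq_integrable_mulmx p n (M : 'M[R]_(p, n)) (X : T -> 'cV[R]_n) :
  (forall a, sq_integrable (fun t => X t a 0)) ->
  forall b, sq_integrable (fun t => (M *m X t) b 0).
Proof.
move=> sX b; under eq_fun do rewrite mxE.
by apply: sq_integrable_sum => a; exact: sq_integrableZl.
Qed.

Definition second_moment n (X : T -> 'cV[R]_n) : 'M[R]_n :=
  \matrix_(a, b) Rintegral mu setT (fun t => X t a 0 * X t b 0).

Lemma Rintegral_sqr_dotv n (x : 'cV[R]_n) (X : T -> 'cV[R]_n) :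
  (forall a, sq_integrable (fun t => X t a 0)) ->
  Rintegral mu setT (fun t => dotv x (X t) ^+ 2) = dotv x (second_moment X *m x).
Proof.
move=> sX; have iXX a b : mu.-integrable setT (fun t => (X t a 0 * X t b 0)%:E).
  exact: integrable_mul_sq.
rewrite dotv_mulmx_sum; transitivity (Rintegral mu setT
    (fun t => \sum_a \sum_b x a 0 * x b 0 * (X t a 0 * X t b 0))).
  apply: eq_Rintegral => t _; rewrite dotvE expr2 mulr_suml; apply: eq_bigr => a _.
  by rewrite mulr_sumr; apply: eq_bigr => b _; ring.
rewrite Rintegral_sum => [|a]; last first.
  by apply: integrable_sum_EFin => b; exact: integrableZl_EFin.
apply: eq_bigr => a _; rewrite Rintegral_sum => [|b]; last exact: integrableZl_EFin.
by apply: eq_bigr => b _; rewrite /second_moment mxE RintegralZl //; exact: iXX.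
Qed.

Lemma weighted_Rintegral_sqr_dotv n k (pw : 'I_k -> R) (x : 'cV[R]_n)
    (X : 'I_k -> T -> 'cV[R]_n) :
  (forall j a, sq_integrable (fun t => X j t a 0)) ->
  \sum_j pw j * Rintegral mu setT (fun t => dotv x (X j t) ^+ 2) =
  dotv x (\matrix_(a, b) (\sum_j pw j * Rintegral mu setT (fun t => X j t a 0 * X j t b 0))
          *m x).
Proof.
move=> sX; rewrite dotv_mulmx_sum.
under [RHS]eq_bigr do under eq_bigr do rewrite mxE mulr_sumr.
under [RHS]eq_bigr do rewrite exchange_big /=.
rewrite exchange_big /=; apply: eq_bigr => j _.
rewrite Rintegral_sqr_dotv // dotv_mulmx_sum mulr_sumr; apply: eq_bigr => a _.
by rewrite mulr_sumr; apply: eq_bigr => b _; rewrite /second_moment mxE; ring.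
Qed.

End SquareIntegrable.

Section WeightedAverage.
Variables (R : realType) (n : nat) (pw : 'I_n -> R).
Hypotheses (pw_ge0 : forall j, 0 <= pw j) (pw_sum1 : \sum_j pw j = 1).

Lemma le_weighted_sum (F : \bar R) (a : 'I_n -> \bar R) (b : 'I_n -> R) :
  (0 <= F)%E -> (forall j, F <= a j + (b j)%:E)%E ->
  (F <= \sum_j (pw j)%:E * a j + (\sum_j pw j * b j)%:E)%E.
Proof.
move=> F_ge0 F_le.
have -> : F = (\sum_j (pw j)%:E * F)%E.
  by rewrite -ge0_sume_distrl ?sumEFin ?pw_sum1 ?mul1e // => j _; rewrite lee_fin.
rewrite -sumEFin -big_split /=; apply: lee_sum => j _.
by rewrite EFinM -muleDr ?fin_num_adde_defl // lee_wpmul2l ?lee_fin.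
Qed.

End WeightedAverage.

Section IntegralBounds.
Context d (T : measurableType d) (R : realType).
Variable mu : {measure set T -> \bar R}.
Local Open Scope ereal_scope.

Lemma integral_le_affine (c : R) (f g h : T -> R) : (0 <= c)%R ->
  (forall t, 0 <= f t)%R -> (forall t, 0 <= g t)%R -> (forall t, 0 <= h t)%R ->
  measurable_fun setT f -> measurable_fun setT g ->
  mu.-integrable setT (fun t => (h t)%:E) ->
  (forall t, f t <= c * g t + h t)%R ->
  \int[mu]_t (f t)%:E <= c%:E * \int[mu]_t (g t)%:E + (Rintegral mu setT h)%:E.
Proof.
move=> c_ge0 f_ge0 g_ge0 h_ge0 mf mg ih f_le.
have mh : measurable_fun setT h by case/integrableP: ih => /measurable_EFinP.
have mcg : measurable_fun setT (fun t => c * g t)%R by exact: measurable_funM.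
apply: (@le_trans _ _ (\int[mu]_t ((c * g t)%R%:E + (h t)%:E))).
  apply: ge0_le_integral => //.
  - by move=> t _; rewrite lee_fin.
  - exact/measurable_EFinP.
  - by apply: emeasurable_funD; exact/measurable_EFinP.
  - by move=> t _; rewrite -EFinD lee_fin.
rewrite ge0_integralD //; last 4 first.
- by move=> t _; rewrite lee_fin mulr_ge0.
- exact/measurable_EFinP.
- by move=> t _; rewrite lee_fin.
- exact/measurable_EFinP.
under eq_integral do rewrite EFinM.
rewrite ge0_integralZl_EFin //; last exact/measurable_EFinP.
  by rewrite /Rintegral fineK // integrable_fin_num.
by move=> t _; rewrite lee_fin.
Qed.

End IntegralBounds.

Lemma le_of_amgm (R : realType) (S q K : R) : 0 <= K -> q <= K ^+ 2 ->
  (forall c, 0 < c -> S <= (2 * c)^-1 * q + c / 2) -> S <= K.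
Proof.
move=> K_ge0 qK S_le; apply/ler_addgt0Pr => e e_gt0.
have c_gt0 : 0 < K + e by rewrite ltr_wpDl.
have : (2 * (K + e))^-1 * q <= (K + e) / 2.
  by rewrite mulrC ler_pdivrMr ?mulr_gt0 //; apply: le_trans qK _; nra.
by have := S_le _ c_gt0; lra.
Qed.

Section RiskTransfer.
Context d (T : measurableType d) (R : realType).
Variable mu : probability T R.
Variables (n : nat) (pw : 'I_n -> R).
Hypotheses (pw_ge0 : forall j, 0 <= pw j) (pw_sum1 : \sum_j pw j = 1).

Lemma Rintegral_abs_le_amgm (f : T -> R) (c : R) : 0 < c -> sq_integrable mu f ->
  Rintegral mu setT (fun t => `|f t|) <=
  (2 * c)^-1 * Rintegral mu setT (fun t => f t ^+ 2) + c / 2.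
Proof.
move=> c_gt0 sf; have [_ if2] := sf.
have ifc : mu.-integrable setT (fun t => ((2 * c)^-1 * f t ^+ 2)%:E).
  exact: integrableZl_EFin.
apply: (@le_trans _ _ (Rintegral mu setT (fun t => (2 * c)^-1 * f t ^+ 2 + c / 2))).
  apply: le_Rintegral => //; first exact: integrable_abs_sq.
    by apply: integrableD_EFin => //; exact: integrable_cst.
  move=> t _; rewrite -subr_ge0 -[f t ^+ 2]real_normK ?num_real //.
  have -> : (2 * c)^-1 * `|f t| ^+ 2 + c / 2 - `|f t| = (2 * c)^-1 * (`|f t| - c) ^+ 2.
    by field; rewrite gt_eqF.
  by rewrite mulr_ge0 ?sqr_ge0 // invr_ge0 mulr_ge0 // ltW.
rewrite RintegralD //; last exact: integrable_cst.
have mu_setT : fine (mu [set: T]) = 1 by rewrite (probability_setT mu).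
by rewrite Rintegral_cst // mu_setT mulr1 RintegralZl.
Qed.

(* Jensen's E|F| <= sqrt (E F^2), via |x| <= x^2 / (2 c) + c / 2 for every c > 0. *)
Lemma weighted_Rintegral_abs_le (F : 'I_n -> T -> R) K : 0 <= K ->
  (forall j, sq_integrable mu (F j)) ->
  \sum_j pw j * Rintegral mu setT (fun t => F j t ^+ 2) <= K ^+ 2 ->
  \sum_j pw j * Rintegral mu setT (fun t => `|F j t|) <= K.
Proof.
move=> K_ge0 sF sum_le; apply: le_of_amgm K_ge0 sum_le _ => c c_gt0.
apply: (@le_trans _ _ (\sum_j pw j *
    ((2 * c)^-1 * Rintegral mu setT (fun t => F j t ^+ 2) + c / 2))).
  by apply: ler_sum => j _; rewrite ler_wpM2l // Rintegral_abs_le_amgm.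
rewrite (eq_bigr (fun j => (2 * c)^-1 * (pw j * Rintegral mu setT (fun t => F j t ^+ 2))
    + pw j * (c / 2))); last by move=> j _; ring.
by rewrite big_split /= -mulr_sumr -mulr_suml pw_sum1 mul1r.
Qed.

Local Open Scope ereal_scope.

Lemma integral_transfer_abs (f : T -> R) (g D : 'I_n -> T -> R) (K : R) : (0 <= K)%R ->
  (forall t, 0 <= f t)%R -> measurable_fun setT f ->
  (forall j t, 0 <= g j t)%R -> (forall j, measurable_fun setT (g j)) ->
  (forall j, sq_integrable mu (D j)) ->
  (\sum_j pw j * Rintegral mu setT (fun t => D j t ^+ 2) <= K ^+ 2)%R ->
  (forall j t, f t <= g j t + `|D j t|)%R ->
  \int[mu]_t (f t)%:E <= \sum_j (pw j)%:E * \int[mu]_t (g j t)%:E + K%:E.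
Proof.
move=> K_ge0 f_ge0 mf g_ge0 mg sD sum_le f_le.
have step j : \int[mu]_t (f t)%:E <=
    \int[mu]_t (g j t)%:E + (Rintegral mu setT (fun t => `|D j t|))%:E.
  rewrite -[X in X + _]mul1e; apply: integral_le_affine => //.
  - exact: integrable_abs_sq.
  - by move=> t; rewrite mul1r.
apply: le_trans (le_weighted_sum pw_ge0 pw_sum1 _ step) _.
  by apply: integral_ge0 => t _; rewrite lee_fin.
by apply: leeD => //; rewrite lee_fin weighted_Rintegral_abs_le.
Qed.

Lemma integral_transfer_sqr (f : T -> R) (g D : 'I_n -> T -> R) (K : R) :
  (forall t, 0 <= f t)%R -> measurable_fun setT f ->
  (forall j t, 0 <= g j t)%R -> (forall j, measurable_fun setT (g j)) ->
  (forall j, sq_integrable mu (D j)) ->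
  (\sum_j pw j * Rintegral mu setT (fun t => D j t ^+ 2) <= K)%R ->
  (forall j t, f t <= 2 * g j t + 2 * D j t ^+ 2)%R ->
  \int[mu]_t (f t)%:E <= 2%:E * (\sum_j (pw j)%:E * \int[mu]_t (g j t)%:E) + (2 * K)%:E.
Proof.
move=> f_ge0 mf g_ge0 mg sD sum_le f_le.
have step j : \int[mu]_t (f t)%:E <=
    2%:E * \int[mu]_t (g j t)%:E + (2 * Rintegral mu setT (fun t => D j t ^+ 2))%:E.
  have [_ iD2] := sD j; rewrite -RintegralZl //.
  apply: integral_le_affine => //; last exact: integrableZl_EFin.
  by move=> t; rewrite mulr_ge0 ?sqr_ge0.
apply: le_trans (le_weighted_sum pw_ge0 pw_sum1 _ step) _.
  by apply: integral_ge0 => t _; rewrite lee_fin.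
apply: leeD.
  rewrite ge0_sume_distrr; last first.
    by move=> j _; rewrite mule_ge0 ?lee_fin ?integral_ge0 // => t _; rewrite lee_fin.
  by apply: lee_sum => j _; rewrite muleCA.
rewrite lee_fin (eq_bigr (fun j => 2 * (pw j * Rintegral mu setT (fun t => D j t ^+ 2)))%R);
  last by move=> j _; rewrite mulrCA.
by rewrite -mulr_sumr ler_wpM2l.
Qed.

End RiskTransfer.

Section Losses.
Variable R : realType.

Lemma lossLL_ge0 (t y : R) : 0 <= lossLL t y.
Proof. by rewrite /lossLL ln_ge0 // lerDl expR_ge0. Qed.

Lemma lossSE_ge0 (t y : R) : 0 <= lossSE t y.
Proof. exact: sqr_ge0. Qed.

Lemma normr_sgn1 (x : R) : `|sgn1 x| = 1.
Proof. by rewrite /sgn1; case: ifP => _; rewrite ?normrN normr1. Qed.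

Lemma lossLL_lipschitz (t t' y : R) : `|y| <= 1 -> lossLL t y <= lossLL t' y + `|t - t'|.
Proof.
move=> y_le1; rewrite /lossLL.
have pos1 (z : R) : 0 < 1 + expR z by rewrite ltr_wpDr ?expR_ge0.
have exp_le : - (y * t) <= - (y * t') + `|t - t'|.
  have -> : - (y * t) = - (y * t') + y * (t' - t) by ring.
  by rewrite lerD2l (le_trans (ler_norm _)) // normrM distrC ler_piMl.
rewrite -[`|t - t'|]expRK -lnM ?posrE ?expR_gt0 // ler_ln ?posrE ?mulr_gt0 ?expR_gt0 //.
rewrite mulrDl mul1r lerD //; first by rewrite -expR0 ler_expR.
by rewrite -expRD ler_expR.
Qed.

Lemma lossSE_le (t t' y : R) : lossSE t y <= 2 * lossSE t' y + 2 * (t - t') ^+ 2.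
Proof. by rewrite /lossSE; have := sqr_ge0 ((t' - y) - (t - t')); nra. Qed.

Context d (T : measurableType d).

Lemma measurable_sgn1 (f : T -> R) :
  measurable_fun setT f -> measurable_fun setT (fun t => sgn1 (f t)).
Proof.
move=> mf; apply: measurable_fun_ifT => //.
by apply: measurable_fun_ler => //; exact: measurable_cst.
Qed.

Lemma measurable_lossLL (f g : T -> R) : measurable_fun setT f -> measurable_fun setT g ->
  measurable_fun setT (fun t => lossLL (f t) (g t)).
Proof.
move=> mf mg; apply: measurableT_comp; first exact: measurable_ln.
apply: measurable_funD => //; apply: measurableT_comp; first exact: measurable_expR.
by apply: measurable_funN; exact: measurable_funM.
Qed.

Lemma measurable_lossSE (f g : T -> R) : measurable_fun setT f -> measurable_fun setT g ->
  measurable_fun setT (fun t => lossSE (f t) (g t)).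
Proof. by move=> mf mg; apply: measurable_funX; exact: measurable_funB. Qed.

End Losses.

Section DomainTransfer.
Context d (T : measurableType d) (R : realType).
Variable mu : probability T R.
Variables (m p : nat) (u : T -> 'cV[R]_m).
Variables (E : Type) (A : E -> 'M[R]_m) (B : E -> 'I_m -> R).
Variables (pa : rel 'I_m) (pay : pred 'I_m) (sol : E -> 'cV[R]_m -> 'cV[R]_m).
Variables (G : 'M[R]_(p, m)) (w : 'cV[R]_m) (theta : 'cV[R]_p).
Variables (n : nat) (trd : 'I_n -> E) (pw : 'I_n -> R) (ep : E).
Hypothesis u_sq : forall i, sq_integrable mu (fun t => u t i 0).
Hypothesis acyclic : forall i j, pa i j -> ~~ connect pa j i.
Hypothesis A_pa : forall e i j, A e i j != 0 -> pa j i.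
Hypothesis w_pay : forall j, w j 0 != 0 -> pay j.
Hypothesis solE : forall e v i, sol e v i 0 = mech (A e) (B e) i (sol e v) (v i 0).
Hypothesis spurious : forall i, intervened A B i -> ~~ anc_y pa pay i.
Hypotheses (pw_ge0 : forall j, 0 <= pw j) (pw_sum1 : \sum_j pw j = 1).

Lemma sq_integrable_sol e i : sq_integrable mu (fun t => sol e (u t) i 0).
Proof.
elim/(acyclic_ind acyclic): i => i IH.
under eq_fun do rewrite solE /mech.
apply: sq_integrableD; last exact: sq_integrableZl.
apply: sq_integrable_sum => j.
have [->|/A_pa/IH sq_j] := eqVneq (A e i j) 0; last exact: sq_integrableZl.
by under eq_fun do rewrite mul0r; exact: sq_integrable_cst.
Qed.

Local Notation gap j t := (dotv theta (G *m (sol ep (u t) - sol (trd j) (u t)))).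

Lemma gapE j t :
  gap j t = dotv theta (G *m sol ep (u t)) - dotv theta (G *m sol (trd j) (u t)).
Proof. by rewrite mulmxBr dotvBr. Qed.

Lemma sq_integrable_gap j : sq_integrable mu (fun t => gap j t).
Proof.
under eq_fun do rewrite gapE.
by apply: sq_integrableB; apply: sq_integrable_dotv;
  apply: sq_integrable_mulmx => i; exact: sq_integrable_sol.
Qed.

Lemma weighted_Rintegral_sqr_gap :
  \sum_j pw j * Rintegral mu setT (fun t => gap j t ^+ 2) =
  dotv theta (\matrix_(a, b) (\sum_j pw j * Rintegral mu setT (fun t =>
      (G *m (sol ep (u t) - sol (trd j) (u t))) a 0 *
      (G *m (sol ep (u t) - sol (trd j) (u t))) b 0)) *m theta).
Proof.
apply: weighted_Rintegral_sqr_dotv => j; apply: sq_integrable_mulmx => i.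
by under eq_fun do rewrite !mxE; apply: sq_integrableB; exact: sq_integrable_sol.
Qed.

Let measurable_pred e : measurable_fun setT (fun t => dotv theta (G *m sol e (u t))).
Proof.
by apply: (proj1 (sq_integrable_dotv _ _)) => a; apply: sq_integrable_mulmx => i;
  exact: sq_integrable_sol.
Qed.

Let measurable_label e : measurable_fun setT (fun t => dotv w (sol e (u t))).
Proof. by apply: (proj1 (sq_integrable_dotv _ _)) => a; exact: sq_integrable_sol. Qed.

Let label_eq j t : dotv w (sol ep (u t)) = dotv w (sol (trd j) (u t)).
Proof. exact: (dotv_sol_invariant acyclic A_pa solE spurious). Qed.

Lemma logistic_risk_transfer K : 0 <= K ->
  \sum_j pw j * Rintegral mu setT (fun t => gap j t ^+ 2) <= K ^+ 2 ->
  (\int[mu]_t (lossLL (dotv theta (G *m sol ep (u t))) (sgn1 (dotv w (sol ep (u t)))))%:E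
    <= \sum_j (pw j)%:E * \int[mu]_t (lossLL (dotv theta (G *m sol (trd j) (u t)))
                                          (sgn1 (dotv w (sol (trd j) (u t)))))%:E
       + K%:E)%E.
Proof.
move=> K_ge0 gap_le.
apply: (integral_transfer_abs pw_ge0 pw_sum1 K_ge0 _ _ _ _ sq_integrable_gap gap_le).
- by move=> t; exact: lossLL_ge0.
- exact: measurable_lossLL (measurable_pred _) (measurable_sgn1 (measurable_label _)).
- by move=> j t; exact: lossLL_ge0.
- move=> j.
  exact: measurable_lossLL (measurable_pred _) (measurable_sgn1 (measurable_label _)).
- by move=> j t; rewrite (label_eq j) gapE lossLL_lipschitz ?normr_sgn1.
Qed.

Lemma squared_risk_transfer K :
  \sum_j pw j * Rintegral mu setT (fun t => gap j t ^+ 2) <= K ->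
  (\int[mu]_t (lossSE (dotv theta (G *m sol ep (u t))) (dotv w (sol ep (u t))))%:E
    <= 2%:E * (\sum_j (pw j)%:E * \int[mu]_t (lossSE (dotv theta (G *m sol (trd j) (u t)))
                                                  (dotv w (sol (trd j) (u t))))%:E)
       + (2 * K)%:E)%E.
Proof.
move=> gap_le.
apply: (integral_transfer_sqr pw_ge0 pw_sum1 _ _ _ _ sq_integrable_gap gap_le).
- by move=> t; exact: lossSE_ge0.
- exact: measurable_lossSE (measurable_pred _) (measurable_label _).
- by move=> j t; exact: lossSE_ge0.
- by move=> j; exact: measurable_lossSE (measurable_pred _) (measurable_label _).
- by move=> j t; rewrite (label_eq j) gapE lossSE_le.
Qed.

End DomainTransfer.

Unset Implicit Arguments.

Theorem theorem1
  (R : realType)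
  (* probability space carrying the shared exogenous noise u ~ P_U *)
  (dT : measure_display) (T : measurableType dT) (mu : probability T R)
  (m d : nat) (u : T -> 'cV[R]_m)
  (* domains, linear latent mechanisms, DAG, solution maps *)
  (E : Type) (A : E -> 'M[R]_m) (B : E -> 'I_m -> R)
  (pa : rel 'I_m) (pay : pred 'I_m)
  (sol : E -> 'cV[R]_m -> 'cV[R]_m)
  (* shared linear observation mechanism g_x and linear map w of g_y *)
  (G : 'M[R]_(d, m)) (w : 'cV[R]_m)
  (* training domains with weights, test domain *)
  (ntr : nat) (trd : 'I_ntr -> E) (pw : 'I_ntr -> R) (ep : E)
  (* eigendecomposition M_{e+} = Q Lambda Q^T *)
  (k : nat) (Q : 'M[R]_(d, k)) (lam : nat -> R)
  (* NCM data *)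
  (np : nat) (Dt : 'M[R]_(d, np)) (r : nat)
  (Qr : 'M[R]_(d, r)) (Qp : 'M[R]_(d, d - r)) (sr : nat -> R) (sp : nat -> R)
  (theta : 'cV[R]_d) :
  (* noise: measurable coordinates with finite second moments *)
  (forall i, measurable_fun setT (fun t => u t i 0)) ->
  (forall i, mu.-integrable setT (fun t => ((u t i 0) ^+ 2)%:E)) ->
  (* DAG structure *)
  (forall i j, pa i j -> ~~ connect pa j i) ->
  (forall e i j, A e i j != 0 -> pa j i) ->
  (forall j, w j 0 != 0 -> pay j) ->
  (* sol e is the solution map u |-> z of the SCM of domain e *)
  (forall e v i, sol e v i 0 = mech (A e) (B e) i (sol e v) (v i 0)) ->
  (* spurious correlation assumption *)
  (forall i, intervened A B i -> ~~ anc_y pa pay i) ->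
  (* training weights *)
  (forall j, 0 <= pw j) -> \sum_j pw j = 1 ->
  (* M_{e+} = Q Lambda Q^T, orthonormal Q with |I(F_E)| columns, sorted eigenvalues *)
  k = #|interv_set A B| ->
  Q^T *m Q = 1%:M ->
  (forall j, 0 <= lam j) -> (forall j, lam j.+1 <= lam j) ->
  (forall j, (k <= j)%N -> lam j = 0) ->
  \matrix_(a < d, b < d)
      (\sum_j pw j * Rintegral mu setT (fun t =>
          (G *m (sol ep (u t) - sol (trd j) (u t))) a 0 *
          (G *m (sol ep (u t) - sol (trd j) (u t))) b 0))
    = Q *m diag_mx (\row_(j < k) lam j) *m Q^T ->
  (* Qr: left singular vectors of Dt for the r largest singular values (sorted),
     Qp: orthonormal basis of the orthogonal complement *)
  Qr^T *m Qr = 1%:M -> Qp^T *m Qp = 1%:M -> Qr^T *m Qp = 0 ->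
  Dt *m Dt^T *m Qr = Qr *m diag_mx (\row_(j < r) sr j) ->
  Dt *m Dt^T *m Qp = Qp *m diag_mx (\row_(j < d - r) sp j) ->
  (forall j, (j.+1 < r)%N -> sr j.+1 <= sr j) ->
  (forall i j, (i < r)%N -> (j < d - r)%N -> sp j <= sr i) ->
  (* NCM constraint *)
  theta^T *m Qr = 0 ->
  let C := opnorm (Qp^T *m Q *m diag_mx (\row_(j < k) Num.sqrt (lam j))) in
  (* (a) logistic regression, y = sign(w^T z) *)
  (\int[mu]_t (lossLL (dotv theta (G *m sol ep (u t)))
                        (sgn1 (dotv w (sol ep (u t)))))%:E
    <= \sum_(j < ntr) (pw j)%:E *
         \int[mu]_t (lossLL (dotv theta (G *m sol (trd j) (u t)))
                            (sgn1 (dotv w (sol (trd j) (u t)))))%:E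
       + (vnorm theta * C)%:E)%E
  /\
  (* (b) linear regression, y = w^T z *)
  (\int[mu]_t (lossSE (dotv theta (G *m sol ep (u t)))
                        (dotv w (sol ep (u t))))%:E
    <= 2%:E * (\sum_(j < ntr) (pw j)%:E *
         \int[mu]_t (lossSE (dotv theta (G *m sol (trd j) (u t)))
                            (dotv w (sol (trd j) (u t))))%:E)
       + (2 * vnorm theta ^+ 2 * C ^+ 2)%:E)%E
  /\
  (* perturbation bound, s = min(r, |I(F_E)|) *)
  C ^+ 2 <= lam 0%N * sdist (firstcols (geq_minl r k) Qr)
                            (firstcols (geq_minr r k) Q) ^+ 2
            + lam (minn r k).
Proof.
(* Neither the value of k, nor lam j = 0 for j >= k, nor the SVD data of Dt is
   needed: any orthonormal split Qr, Qp with theta^T Qr = 0 will do. *)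
move=> u_meas u_int acyclic A_pa w_pay solE spurious pw_ge0 pw_sum1 _ QtQ lam_ge0 lam_dec _
  M_eig QrtQr QptQp QrtQp _ _ _ _ theta_Qr C.
have u_sq i : sq_integrable mu (fun t => u t i 0) by split.
have theta_proj : Qp *m (Qp^T *m theta) = theta.
  apply: orthomx_complement QrtQr QptQp QrtQp _.
  by rewrite -[LHS]trmxK trmx_mul trmxK theta_Qr trmx0.
have gap_le : \sum_j pw j * Rintegral mu setT
    (fun t => dotv theta (G *m (sol ep (u t) - sol (trd j) (u t))) ^+ 2)
    <= (vnorm theta * C) ^+ 2.
  by rewrite (weighted_Rintegral_sqr_gap _ _ _ _ _ u_sq acyclic A_pa solE) M_eig dotv_eig_le.
split; [|split].
- apply: (logistic_risk_transfer u_sq acyclic A_pa w_pay solE spurious pw_ge0 pw_sum1) => //.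
  by rewrite mulr_ge0 ?vnorm_ge0 ?opnorm_ge0.
- rewrite -mulrA -exprMn.
  exact: (squared_risk_transfer u_sq acyclic A_pa w_pay solE spurious pw_ge0 pw_sum1).
- exact: perturbation_bound.
Qed.
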